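(* A morphism $g:(V,f,h)\to(V',f',h')$ in the category $\mathcal R(P,I)$ is a monomorphism in $\mathcal R(P,I)$ if and only if $g$ is injective (at every vertex), and it is an epimorphism in $\mathcal R(P,I)$ if and only if $g$ is surjective (at every vertex).
   Context: Let $\tilde Q$ be a finite acyclic quiver, $P$ a fixed projective representation and $I$ a fixed injective representation of $\tilde Q$ over $\mathbb C$ (finite-dimensional). The category $\mathcal R(P,I)$ has as objects triples $(V,f,h)$ with $V$ a finite-dimensional representation of $\tilde Q$, $f:P\to V$ and $h:V\to I$ morphisms of representations; a morphism $(V,f,h)\to(V',f',h')$ is a morphism of representations $g:V\to V'$ with $g\circ f=f'$ and $h'\circ g=h$; composition is composition of representation morphisms. *)

(* Representations of a finite quiver over the complex numbers
   C := complex R (R = Stdlib reals, a realType via Rstruct), given concretely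
   by dimension vectors and matrices acting on ROW vectors (v |-> v *m A). *)
From HB Require Import structures.
From mathcomp Require Import all_boot all_order all_algebra.
From mathcomp Require Import complex.
From mathcomp Require Import Rstruct.
From Stdlib Require Import Reals.
Set Implicit Arguments. Unset Strict Implicit. Unset Printing Implicit Defensive.
Import Order.TTheory GRing.Theory Num.Theory.
Local Open Scope ring_scope.

Definition CC : fieldType := complex Rdefinitions.R.

Record quiver := Quiver {
  Q0 : finType;
  Q1 : finType;
  src : Q1 -> Q0;
  tgt : Q1 -> Q0 }.

Fixpoint is_path (Q : quiver) (x y : Q0 Q) (p : seq (Q1 Q)) : bool :=
  match p with
  | [::] => x == y
  | a :: p' => (src a == x) && is_path (tgt a) y p'
  end.

Definition acyclic (Q : quiver) : Prop :=
  forall (x : Q0 Q) (p : seq (Q1 Q)), p != [::] -> ~~ is_path x x p.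

Record rep (Q : quiver) := Rep {
  rdim : Q0 Q -> nat;
  rmap : forall a : Q1 Q, 'M[CC]_(rdim (src a), rdim (tgt a)) }.

Definition repHom (Q : quiver) (V W : rep Q) :=
  forall i : Q0 Q, 'M[CC]_(rdim V i, rdim W i).

Definition is_rep_mor (Q : quiver) (V W : rep Q) (g : repHom V W) : Prop :=
  forall a : Q1 Q, rmap V a *m g (tgt a) = g (src a) *m rmap W a.

(* Composition "first g then h" (row-vector convention). *)
Definition rcomp (Q : quiver) (U V W : rep Q) (g : repHom U V) (h : repHom V W)
  : repHom U W := fun i => g i *m h i.

Definition rep_mono (Q : quiver) (V W : rep Q) (g : repHom V W) : Prop :=
  forall (U : rep Q) (a b : repHom U V), is_rep_mor a -> is_rep_mor b ->
    (forall i, rcomp a g i = rcomp b g i) -> forall i, a i = b i.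

Definition rep_epi (Q : quiver) (V W : rep Q) (g : repHom V W) : Prop :=
  forall (U : rep Q) (a b : repHom W U), is_rep_mor a -> is_rep_mor b ->
    (forall i, rcomp g a i = rcomp g b i) -> forall i, a i = b i.

Definition rep_projective (Q : quiver) (P : rep Q) : Prop :=
  forall (M N : rep Q) (p : repHom M N), is_rep_mor p -> rep_epi p ->
  forall f : repHom P N, is_rep_mor f ->
  exists f' : repHom P M, is_rep_mor f' /\ forall i, rcomp f' p i = f i.

Definition rep_injective (Q : quiver) (I : rep Q) : Prop :=
  forall (M N : rep Q) (j : repHom M N), is_rep_mor j -> rep_mono j ->
  forall h : repHom M I, is_rep_mor h ->
  exists h' : repHom N I, is_rep_mor h' /\ forall i, rcomp j h' i = h i.

Record RObj (Q : quiver) (P I : rep Q) := RObject {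
  RV : rep Q;
  Rf : repHom P RV;
  Rh : repHom RV I;
  Rf_mor : is_rep_mor Rf;
  Rh_mor : is_rep_mor Rh }.

Definition is_R_mor (Q : quiver) (P I : rep Q) (X Y : RObj P I)
  (g : repHom (RV X) (RV Y)) : Prop :=
  [/\ is_rep_mor g,
      forall i, rcomp (Rf X) g i = Rf Y i &
      forall i, rcomp g (Rh Y) i = Rh X i].
Arguments is_R_mor {Q P I} X Y g.

Definition R_mono (Q : quiver) (P I : rep Q) (X Y : RObj P I)
  (g : repHom (RV X) (RV Y)) : Prop :=
  forall (Z : RObj P I) (a b : repHom (RV Z) (RV X)),
    is_R_mor Z X a -> is_R_mor Z X b ->
    (forall i, rcomp a g i = rcomp b g i) -> forall i, a i = b i.
Arguments R_mono {Q P I} X Y g.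

Definition R_epi (Q : quiver) (P I : rep Q) (X Y : RObj P I)
  (g : repHom (RV X) (RV Y)) : Prop :=
  forall (Z : RObj P I) (a b : repHom (RV Y) (RV Z)),
    is_R_mor Y Z a -> is_R_mor Y Z b ->
    (forall i, rcomp g a i = rcomp g b i) -> forall i, a i = b i.
Arguments R_epi {Q P I} X Y g.

Definition vertexwise_injective (Q : quiver) (V W : rep Q) (g : repHom V W) : Prop :=
  forall i, injective (fun v : 'rV[CC]_(rdim V i) => v *m g i).

Definition vertexwise_surjective (Q : quiver) (V W : rep Q) (g : repHom V W) : Prop :=
  forall i (w : 'rV[CC]_(rdim W i)), exists v : 'rV[CC]_(rdim V i), v *m g i = w.

(* Vertexwise injective (surjective) maps are left (right) cancellable, hence
   monomorphisms (epimorphisms).  Conversely, let g : X -> Y be a monomorphism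
   of R(P,I) and K the kernel representation of g, with inclusion e.  Then
   X (+) K, with the maps (f, 0) from P and (h; 0) to I, is again an object of
   R(P,I), and [1; 0] and [1; e] are two morphisms from it to X which agree
   after composition with g; hence e = 0 and g is injective.  Epimorphisms are
   treated dually with the cokernel of g. *)
From mathcomp Require Import all_boot all_order all_algebra.
Set Implicit Arguments. Unset Strict Implicit. Unset Printing Implicit Defensive.
Import GRing.Theory.
Local Open Scope ring_scope.

Section Representations.
Variable Q : quiver.
Implicit Types V W K : rep Q.

Lemma zero_rep_mor V W : @is_rep_mor Q V W (fun i => 0).
Proof. by move=> a; rewrite mulmx0 mul0mx. Qed.

Definition dsumRep V K : rep Q :=
  @Rep Q (fun i => (rdim V i + rdim K i)%N)
    (fun a => block_mx (rmap V a) 0 0 (rmap K a)).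

Lemma row0_rep_mor W V K (f : repHom W V) : is_rep_mor f ->
  @is_rep_mor Q W (dsumRep V K) (fun i => row_mx (f i) 0).
Proof. by move=> hf a; rewrite mul_mx_row mul_row_block !mulmx0 mul0mx !addr0 hf. Qed.

Lemma col0_rep_mor V K W (h : repHom V W) : is_rep_mor h ->
  @is_rep_mor Q (dsumRep V K) W (fun i => col_mx (h i) 0).
Proof. by move=> hh a; rewrite mul_block_col mul_col_mx !mul0mx mulmx0 !addr0 hh. Qed.

Lemma col1_rep_mor V K (e : repHom K V) : is_rep_mor e ->
  @is_rep_mor Q (dsumRep V K) V (fun i => col_mx 1%:M (e i)).
Proof.
move=> he a; rewrite mul_block_col mul_col_mx mulmx1 mul1mx !mul0mx.
by rewrite addr0 add0r he.
Qed.

Lemma row1_rep_mor V K (q : repHom V K) : is_rep_mor q ->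
  @is_rep_mor Q V (dsumRep V K) (fun i => row_mx 1%:M (q i)).
Proof.
move=> hq a; rewrite mul_mx_row mul_row_block mulmx1 mul1mx !mulmx0.
by rewrite addr0 add0r hq.
Qed.

(* Encoded on C^(dim V_i), mapped onto ker g_i by the square matrix kermx (g i),
   whose rows span ker g_i; pinvmx solves for the induced arrow maps. *)
Definition kerRep V W (g : repHom V W) : rep Q :=
  @Rep Q (fun i => rdim V i)
    (fun a => kermx (g (src a)) *m rmap V a *m pinvmx (kermx (g (tgt a)))).

Lemma ker_rep_mor V W (g : repHom V W) : is_rep_mor g ->
  @is_rep_mor Q (kerRep g) V (fun i => kermx (g i)).
Proof.
move=> hg a; rewrite /= mulmxKpV // sub_kermx -mulmxA hg mulmxA.
by rewrite mulmx_ker mul0mx.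
Qed.

(* W_i maps onto its quotient by im g_i through coker g i; the arrow maps of
   cokRep solve coker_src *m C_a = W_a *m coker_tgt, a left division done
   through transposes. *)
Definition coker V W (g : repHom V W) : repHom W W := fun i => (kermx (g i)^T)^T.

Lemma mulmx_coker_rep V W (g : repHom V W) i : g i *m coker g i = 0.
Proof. by apply: trmx_inj; rewrite trmx_mul trmxK mulmx_ker trmx0. Qed.

Lemma coker_eq0 V W (g : repHom V W) i : (coker g i == 0) = row_full (g i).
Proof. by rewrite -trmx0 (inj_eq trmx_inj) kermx_eq0 /row_free /row_full mxrank_tr. Qed.

Lemma mulmx_trpinv m n p (A : 'M[CC]_(m, n)) (B : 'M[CC]_(m, p)) :
  (B^T <= A^T)%MS -> A *m (B^T *m pinvmx A^T)^T = B.
Proof. by move=> sBA; apply: trmx_inj; rewrite trmx_mul trmxK mulmxKpV. Qed.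

Definition cokRep V W (g : repHom V W) : rep Q :=
  @Rep Q (fun i => rdim W i)
    (fun a => ((rmap W a *m coker g (tgt a))^T *m pinvmx (coker g (src a))^T)^T).

Lemma coker_rep_mor V W (g : repHom V W) : is_rep_mor g ->
  @is_rep_mor Q W (cokRep g) (coker g).
Proof.
move=> hg a; rewrite /= mulmx_trpinv // trmx_mul !trmxK sub_kermx -mulmxA.
by rewrite -trmx_mul -hg trmx_mul mulmxA mulmx_ker mul0mx.
Qed.

Lemma row_free_vertexwise_injective V W (g : repHom V W) :
  (forall i, row_free (g i)) -> vertexwise_injective g.
Proof. by move=> free_g i; apply: row_free_inj. Qed.

Lemma row_full_vertexwise_surjective V W (g : repHom V W) :
  (forall i, row_full (g i)) -> vertexwise_surjective g.
Proof. by move=> full_g i w; exists (w *m pinvmx (g i)); rewrite mulmxKpV ?submx_full. Qed.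

End Representations.

Section RCategory.
Variables (Q : quiver) (P I : rep Q).
Implicit Types X Y : RObj P I.

Definition dsumRObj X (K : rep Q) : RObj P I :=
  RObject (row0_rep_mor K (Rf_mor X)) (col0_rep_mor K (Rh_mor X)).

Lemma col1_R_mor X K (e : repHom K (RV X)) :
  is_rep_mor e -> (forall i, e i *m Rh X i = 0) ->
  is_R_mor (dsumRObj X K) X (fun i => col_mx 1%:M (e i)).
Proof.
move=> he eh0; split; first exact: col1_rep_mor.
- by move=> i; rewrite /rcomp /= mul_row_col mulmx1 mul0mx addr0.
- by move=> i; rewrite /rcomp /= mul_col_mx mul1mx eh0.
Qed.

Lemma row1_R_mor Y K (q : repHom (RV Y) K) :
  is_rep_mor q -> (forall i, Rf Y i *m q i = 0) ->
  is_R_mor Y (dsumRObj Y K) (fun i => row_mx 1%:M (q i)).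
Proof.
move=> hq fq0; split; first exact: row1_rep_mor.
- by move=> i; rewrite /rcomp /= mul_mx_row mulmx1 fq0.
- by move=> i; rewrite /rcomp /= mul_row_col mul1mx mulmx0 addr0.
Qed.

Lemma R_mono_annihilator X Y (g : repHom (RV X) (RV Y)) :
  is_R_mor X Y g -> R_mono X Y g ->
  forall K (e : repHom K (RV X)), is_rep_mor e -> (forall i, e i *m g i = 0) ->
  forall i, e i = 0.
Proof.
move=> [_ _ gh] mono_g K e he eg0 i.
have eh0 j : e j *m Rh X j = 0 by rewrite -gh /rcomp mulmxA eg0 mul0mx.
have zh0 j : (0 : 'M_(rdim K j, _)) *m Rh X j = 0 by rewrite mul0mx.
have := mono_g _ _ _ (col1_R_mor (zero_rep_mor K (RV X)) zh0) (col1_R_mor he eh0).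
case/(_ _ i)/eq_col_mx => [j|_ //].
by rewrite /rcomp !mul_col_mx mul0mx eg0.
Qed.

Lemma R_epi_coannihilator X Y (g : repHom (RV X) (RV Y)) :
  is_R_mor X Y g -> R_epi X Y g ->
  forall K (q : repHom (RV Y) K), is_rep_mor q -> (forall i, g i *m q i = 0) ->
  forall i, q i = 0.
Proof.
move=> [_ fg _] epi_g K q hq gq0 i.
have fq0 j : Rf Y j *m q j = 0 by rewrite -fg /rcomp -mulmxA gq0 mulmx0.
have f0 j : Rf Y j *m (0 : 'M_(_, rdim K j)) = 0 by rewrite mulmx0.
have := epi_g _ _ _ (row1_R_mor (zero_rep_mor (RV Y) K) f0) (row1_R_mor hq fq0).
case/(_ _ i)/eq_row_mx => [j|_ //].
by rewrite /rcomp !mul_mx_row mulmx0 gq0.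
Qed.

Lemma vertexwise_injective_R_mono X Y (g : repHom (RV X) (RV Y)) :
  vertexwise_injective g -> R_mono X Y g.
Proof.
move=> inj_g Z a b _ _ ab_g i; apply/row_matrixP => j.
by apply: (inj_g i); rewrite /= -!row_mul; have := ab_g i; rewrite /rcomp => ->.
Qed.

Lemma vertexwise_surjective_R_epi X Y (g : repHom (RV X) (RV Y)) :
  vertexwise_surjective g -> R_epi X Y g.
Proof.
move=> surj_g Z a b _ _ g_ab i; apply/row_matrixP => j.
rewrite !rowE; have [v <-] := surj_g i (delta_mx 0 j).
by rewrite -!mulmxA; have := g_ab i; rewrite /rcomp => ->.
Qed.

End RCategory.

Theorem mainTheorem12 (Q : quiver) (hQ : acyclic Q) (P I : rep Q)
  (hP : rep_projective P) (hI : rep_injective I)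
  (X Y : RObj P I) (g : repHom (RV X) (RV Y)) (hg : is_R_mor X Y g) :
  (R_mono X Y g <-> vertexwise_injective g) /\
  (R_epi X Y g <-> vertexwise_surjective g).
Proof.
have [g_mor _ _] := hg.
split; split; [| exact: vertexwise_injective_R_mono | | exact: vertexwise_surjective_R_epi].
- move=> mono_g; apply: row_free_vertexwise_injective => i.
  rewrite -kermx_eq0; apply/eqP.
  exact: (R_mono_annihilator hg mono_g (ker_rep_mor g_mor) (fun j => mulmx_ker _) i).
- move=> epi_g; apply: row_full_vertexwise_surjective => i.
  rewrite -coker_eq0; apply/eqP.
  exact: (R_epi_coannihilator hg epi_g (coker_rep_mor g_mor) (mulmx_coker_rep g) i).
Qed.
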